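(* Fix integers $d\geq 2$ and $n\geq d+2$. For every configuration $X=\{x_i\}_{i\in[n]}$ in the unit sphere $S^{d-1}\subseteq\mathbb{R}^d$, if $\alpha(X)>0$ then $\delta(X)<1$.
   Context: $[n]=\{1,\ldots,n\}$. For a configuration $X=\{x_i\}_{i\in[n]}$ in $S^{d-1}$, $\alpha(X):=\max_{i\neq j}\langle x_i,x_j\rangle$ and $\delta(X):=\min_{j\in[n]}\operatorname{dist}(x_j,\operatorname{conv}\{x_i\}_{i\in[n]\setminus\{j\}})$, with Euclidean distance. *)

From HB Require Import structures.
From mathcomp Require Import all_boot all_order all_algebra.
From mathcomp Require Import classical_sets reals.
Set Implicit Arguments. Unset Strict Implicit. Unset Printing Implicit Defensive.
Import Order.TTheory GRing.Theory Num.Theory.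
Local Open Scope ring_scope.
Local Open Scope classical_set_scope.

Definition dotp (R : realType) (d : nat) (u v : 'rV[R]_d) : R :=
  \sum_(k < d) u 0 k * v 0 k.

Definition enorm (R : realType) (d : nat) (u : 'rV[R]_d) : R :=
  Num.sqrt (dotp u u).
Definition edist (R : realType) (d : nat) (u v : 'rV[R]_d) : R :=
  enorm (u - v).

Definition on_sphere (R : realType) (d n : nat) (X : 'I_n -> 'rV[R]_d) : Prop :=
  forall i, enorm (X i) = 1.

(* alpha(X) = max_{i <> j} <x_i, x_j>: supremum of the finite set of inner
   products over pairs i <> j (a maximum when n >= 2). *)
Definition alpha (R : realType) (d n : nat) (X : 'I_n -> 'rV[R]_d) : R :=
  sup [set dotp (X ij.1) (X ij.2) | ij in [set ij : 'I_n * 'I_n | ij.1 != ij.2]].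

Definition conv_others (R : realType) (d n : nat) (X : 'I_n -> 'rV[R]_d)
    (j : 'I_n) : set 'rV[R]_d :=
  [set y | exists w : 'I_n -> R,
     [/\ (forall i, 0 <= w i), w j = 0, \sum_(i < n) w i = 1 &
         y = \sum_(i < n) w i *: X i]].

Definition dist_set (R : realType) (d : nat) (x : 'rV[R]_d) (S : set 'rV[R]_d) : R :=
  inf [set edist x y | y in S].

Definition delta (R : realType) (d n : nat) (X : 'I_n -> 'rV[R]_d) : R :=
  inf [set dist_set (X j) (conv_others X j) | j in [set: 'I_n]].

(* Since n >= d + 2, the points are affinely dependent, and splitting a
   dependence into its positive and negative parts (Radon) gives a point p
   lying in the convex hull of every n - 1 of them.  If p <> 0, then p is an
   average of the x_k, so <x_k, p> >= |p|^2 for some k, whence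
   |x_k - p|^2 <= 1 - |p|^2 < 1.  If p = 0, take i <> j with
   c = <x_i, x_j> > 0: the segment [0, x_i] lies in conv{x_k}_(k <> j), and
   |x_j - c x_i|^2 = 1 - c^2 < 1. *)
From HB Require Import structures.
From mathcomp Require Import all_boot all_order all_algebra.
From mathcomp Require Import classical_sets reals.
From mathcomp Require Import ring lra.
Set Implicit Arguments. Unset Strict Implicit.
Import Order.TTheory GRing.Theory Num.Theory.
Local Open Scope ring_scope.

Section DotProduct.
Variables (R : realType) (d : nat).
Implicit Types u v w : 'rV[R]_d.

Lemma dotpC u v : dotp u v = dotp v u.
Proof. by apply: eq_bigr => k _; rewrite mulrC. Qed.

Lemma dotp0l v : dotp 0 v = 0.
Proof. by rewrite /dotp big1 // => k _; rewrite mxE mul0r. Qed.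

Lemma dotpDl u v w : dotp (u + w) v = dotp u v + dotp w v.
Proof. by rewrite /dotp -big_split; apply: eq_bigr => k _; rewrite !mxE mulrDl. Qed.

Lemma dotpZl a u v : dotp (a *: u) v = a * dotp u v.
Proof. by rewrite /dotp mulr_sumr; apply: eq_bigr => k _; rewrite !mxE mulrA. Qed.

Lemma dotpBl u v w : dotp (u - w) v = dotp u v - dotp w v.
Proof. by rewrite dotpDl -scaleN1r dotpZl mulN1r. Qed.

Lemma dotpZr a u v : dotp v (a *: u) = a * dotp v u.
Proof. by rewrite dotpC dotpZl dotpC. Qed.

Lemma dotpBr u v w : dotp v (u - w) = dotp v u - dotp v w.
Proof. by rewrite dotpC dotpBl !(dotpC v). Qed.

Lemma dotp_suml n (F : 'I_n -> 'rV[R]_d) v :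
  dotp (\sum_i F i) v = \sum_i dotp (F i) v.
Proof.
by apply: (big_morph (fun u => dotp u v)) => [x y|]; rewrite ?dotpDl ?dotp0l.
Qed.

Lemma dotpp_ge0 u : 0 <= dotp u u.
Proof. by apply: sumr_ge0 => k _; rewrite -expr2 sqr_ge0. Qed.

Lemma dotpp_eq0 u : (dotp u u == 0) = (u == 0).
Proof.
apply/eqP/eqP => [uu0|->]; last exact: dotp0l.
apply/rowP => k; rewrite mxE; apply/eqP; rewrite -sqrf_eq0 expr2.
by apply/eqP; apply: (psumr_eq0P _ uu0) => // i _; rewrite -expr2 sqr_ge0.
Qed.

Lemma dotp_sqrB u v :
  dotp (u - v) (u - v) = dotp u u - 2 * dotp u v + dotp v v.
Proof. by rewrite dotpBl !dotpBr (dotpC v u); ring. Qed.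

Lemma edist_lt1 u v : (edist u v < 1) = (dotp (u - v) (u - v) < 1).
Proof. by rewrite /edist /enorm -{1}sqrtr1 ltr_sqrt ?ltr01. Qed.

Lemma dotpp_unit u : enorm u = 1 -> dotp u u = 1.
Proof. by move=> u1; rewrite -[LHS]sqr_sqrtr ?dotpp_ge0 // -/(enorm u) u1 expr1n. Qed.

Lemma edist_ge0 u v : 0 <= edist u v.
Proof. exact: sqrtr_ge0. Qed.

Lemma dist_set_ge0 u S : 0 <= dist_set u S.
Proof.
have [->|/set0P[v Sv]] := eqVneq S set0; first by rewrite /dist_set image_set0 inf0.
apply: lb_le_inf; first by exists (edist u v), v.
by move=> _ [w _ <-]; apply: edist_ge0.
Qed.

End DotProduct.

Lemma affine_dependence (F : fieldType) d n (X : 'I_n -> 'rV[F]_d) :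
  (d.+1 < n)%N ->
  exists l : 'I_n -> F,
    [/\ exists i, l i != 0, \sum_i l i = 0 & \sum_i l i *: X i = 0].
Proof.
(* [M] has n rows and rank at most d + 1, so its left kernel is nontrivial. *)
move=> dn; pose M := row_mx (\matrix_i X i) (const_mx 1 : 'M_(n, 1)).
have : ~~ row_free M.
  rewrite /row_free; apply: contraTN dn => /eqP rkM.
  by rewrite -leqNgt -rkM; apply: leq_trans (rank_leq_col M) _; rewrite addn1.
rewrite -kermx_eq0 => /rowV0Pn [v /sub_kermxP].
rewrite mul_mx_row => /eqP; rewrite row_mx_eq0 => /andP[/eqP vX /eqP v1] /rV0Pn[i vi].
exists (fun i => v 0 i); split; first by exists i.
- have /rowP/(_ 0) := v1; rewrite !mxE => sum_v; rewrite -[RHS]sum_v.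
  by apply: eq_bigr => k _; rewrite mxE mulr1.
- by rewrite -[RHS]vX mulmx_sum_row; apply: eq_bigr => k _; rewrite rowK.
Qed.

Lemma exists_ge_wmean (R : realDomainType) n (w f : 'I_n -> R) :
  (forall i, 0 <= w i) -> \sum_i w i = 1 -> exists k, \sum_i w i * f i <= f k.
Proof.
case: n w f => [|n] w f w_ge0 w1.
  by move: w1; rewrite big_ord0 => /eqP; rewrite eq_sym oner_eq0.
case: (arg_maxP f (isT : predT ord0)) => k _ fk; exists k.
rewrite -[leRHS]mul1r -w1 mulr_suml; apply: ler_sum => i _.
by rewrite ler_wpM2l //; apply: fk.
Qed.

Section ConvexHull.
Variables (R : realType) (d n : nat) (X : 'I_n -> 'rV[R]_d).

Lemma conv_others_vertex i j : i != j -> conv_others X j (X i).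
Proof.
move=> ij; exists (fun k => (k == i)%:R); split.
- by move=> k; rewrite ler0n.
- by rewrite eq_sym (negbTE ij).
- by rewrite (bigD1 i) //= eqxx big1 ?addr0 // => k /negbTE->.
- by rewrite (bigD1 i) //= eqxx scale1r big1 ?addr0 // => k /negbTE->; rewrite scale0r.
Qed.

Lemma conv_others_convex j (t : R) y z : 0 <= t <= 1 ->
  conv_others X j y -> conv_others X j z -> conv_others X j (t *: y + (1 - t) *: z).
Proof.
move=> /andP[t0 t1] [v [v0 vj v1 ->]] [w [w0 wj w1 ->]].
exists (fun k => t * v k + (1 - t) * w k); split.
- by move=> k; rewrite addr_ge0 ?mulr_ge0 ?subr_ge0.
- by rewrite vj wj !mulr0 addr0.
- by rewrite big_split -!mulr_sumr v1 w1 /=; ring.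
- rewrite !scaler_sumr -big_split; apply: eq_bigr => k _ /=.
  by rewrite !scalerA -scalerDl.
Qed.

Lemma radon_point : (d.+1 < n)%N -> exists p, forall j, conv_others X j p.
Proof.
move=> /(affine_dependence X) [l [[i li] l0 lX]].
pose S := \sum_k `|l k|.
have S_gt0 : 0 < S.
  rewrite lt_def sumr_ge0 // andbT psumr_neq0 //.
  by apply/hasP; exists i; rewrite ?mem_index_enum // normr_gt0.
pose a k := (`|l k| + l k) / S; pose b k := (`|l k| - l k) / S.
have a_ge0 k : 0 <= a k.
  by apply: divr_ge0 (ltW S_gt0); have := ler_norm (- l k); rewrite normrN; lra.
have b_ge0 k : 0 <= b k by apply: divr_ge0 (ltW S_gt0); rewrite subr_ge0 ler_norm.
have a1 : \sum_k a k = 1 by rewrite -mulr_suml big_split /= l0 addr0 divff ?gt_eqF.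
have b1 : \sum_k b k = 1 by rewrite -mulr_suml sumrB l0 subr0 divff ?gt_eqF.
have abX : \sum_k a k *: X k = \sum_k b k *: X k.
  have ab k : a k - b k = 2 / S * l k by rewrite /a /b; ring.
  apply/eqP; rewrite -subr_eq0 -sumrB.
  under eq_bigr do rewrite -scalerBl ab -scalerA.
  by rewrite -scaler_sumr lX scaler0.
exists (\sum_k a k *: X k) => j.
have [lj0|lj0] := leP 0 (l j).
- by rewrite abX; exists b; split => //; rewrite /b ger0_norm // subrr mul0r.
- by exists a; split => //; rewrite /a ltr0_norm // addrC subrr mul0r.
Qed.

End ConvexHull.

Lemma delta_le_edist (R : realType) d n (X : 'I_n -> 'rV[R]_d) j y :
  conv_others X j y -> delta X <= edist (X j) y.
Proof.
move=> Cy; apply: (@le_trans _ _ (dist_set (X j) (conv_others X j))).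
- by apply: ge_inf; [exists 0 => _ [k _ <-]; apply: dist_set_ge0 | exists j].
- by apply: ge_inf; [exists 0 => _ [z _ <-]; apply: edist_ge0 | exists y].
Qed.

Lemma alpha_gt0 (R : realType) d n (X : 'I_n -> 'rV[R]_d) :
  0 < alpha X -> exists i j, i != j /\ 0 < dotp (X i) (X j).
Proof.
rewrite /alpha; set P := (X in sup X).
have [->|/set0P P0] := eqVneq P set0; first by rewrite sup0 ltxx.
by case/(sup_gt P0) => _ [[i j] /= ij <-] c_gt0; exists i, j.
Qed.

Theorem lemma4 (R : realType) (d n : nat) (X : 'I_n -> 'rV[R]_d) :
  (2 <= d)%N -> (d + 2 <= n)%N -> on_sphere X ->
  0 < alpha X -> delta X < 1.
Proof.
move=> _; rewrite addn2 => dn sph /alpha_gt0 [i [j [ij c_gt0]]].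
have unit k : dotp (X k) (X k) = 1 by exact: dotpp_unit.
have [p p_conv] := radon_point X dn.
case: (eqVneq p 0) p_conv => [-> | p_neq0] p_conv.
- set c := dotp (X i) (X j) in c_gt0.
  have c_le1 : c <= 1.
    by have := dotpp_ge0 (X i - X j); rewrite dotp_sqrB !unit -/c; lra.
  have cXi : conv_others X j (c *: X i).
    rewrite -[c *: X i]addr0 -(scaler0 _ (1 - c)).
    by apply: conv_others_convex; [rewrite ltW | exact: conv_others_vertex | ].
  apply: le_lt_trans (delta_le_edist cXi) _.
  rewrite edist_lt1 dotp_sqrB dotpZr dotpZl dotpZr !unit dotpC -/c; nra.
- have [w [w_ge0 _ w1 pE]] := p_conv i.
  have [k pk] := exists_ge_wmean (fun k => dotp (X k) p) w_ge0 w1.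
  apply: le_lt_trans (delta_le_edist (p_conv k)) _.
  have pp_gt0 : 0 < dotp p p by rewrite lt_def dotpp_eq0 p_neq0 dotpp_ge0.
  rewrite edist_lt1 dotp_sqrB unit.
  suff : dotp p p <= dotp (X k) p by lra.
  by rewrite {1}pE dotp_suml; under eq_bigr do rewrite dotpZl.
Qed.
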